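(* Let $m\ge0$ be an integer and $\gamma\ge m+\frac32$, and let $g_{m,\gamma}(x)=(x+1)^m(3-2x)^{-\gamma}$ for $x\in[-1,1]$. Then for all $x\in[-1,1]$, $$I_+^{\gamma-m-3/2}g_{m,\gamma}(x)=\sqrt{\frac\pi5}\,\frac{\Gamma(\gamma-\frac12)}{\Gamma(\gamma)}\,(x+1)^{m+1}(3-2x)^{-(\gamma-1/2)}.$$ In particular, for $\lambda\ge0$ and $\varphi_{2\lambda+3}(\tau)=(3-2\tau)^{-(2\lambda+3)/2}$, $I^\lambda_+\varphi_{2\lambda+3}(x)=\sqrt{\frac\pi5}\frac{\Gamma(\lambda+1)}{\Gamma(\lambda+\frac32)}(x+1)(3-2x)^{-(\lambda+1)}$.
   Context: For $f\in L^1[-1,1]$ and $\mu\ge0$, $I^\mu_+f(x)=(1+x)^{-\mu+1/2}\int_{-1}^x(x-\tau)^{-1/2}(1+\tau)^\mu f(\tau)\,d\tau$. *)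

From Stdlib Require Import Reals Lra ClassicalEpsilon.
Open Scope R_scope.

Definition improper_int_ab (f : R -> R) (a b L : R) : Prop :=
  (forall u v, a < u -> u <= v -> v < b -> inhabited (Riemann_integrable f u v)) /\
  (forall eps, eps > 0 -> exists delta, delta > 0 /\
     forall u v (pr : Riemann_integrable f u v),
       a < u -> u < a + delta -> b - delta < v -> v < b ->
       Rabs (RiemannInt pr - L) < eps).

Definition improper_int_a_inf (f : R -> R) (a L : R) : Prop :=
  (forall u v, a < u -> u <= v -> inhabited (Riemann_integrable f u v)) /\
  (forall eps, eps > 0 -> exists delta M, delta > 0 /\
     forall u v (pr : Riemann_integrable f u v),
       a < u -> u < a + delta -> M < v ->
       Rabs (RiemannInt pr - L) < eps).

(* Euler's Gamma function Gamma(s) = int_0^oo t^(s-1) e^(-t) dt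
   (the value is chosen by epsilon; it exists and is unique for s > 0). *)
Definition Gamma (s : R) : R :=
  epsilon (inhabits 0)
    (fun L => improper_int_a_inf (fun t => Rpower t (s - 1) * exp (- t)) 0 L).

(* "I^mu_+ f (x) = V": the defining integral exists (as an improper
   integral, integrands here are nonnegative) and the value equals V. *)
Definition I_plus_eq (mu : R) (f : R -> R) (x V : R) : Prop :=
  exists J,
    improper_int_ab
      (fun t => Rpower (x - t) (- (1/2)) * Rpower (1 + t) mu * f t) (-1) x J
    /\ Rpower (1 + x) (- mu + 1/2) * J = V.

Definition g_fun (m : nat) (gam : R) (x : R) : R :=
  (x + 1) ^ m * Rpower (3 - 2 * x) (- gam).

Definition phi_fun (lam : R) (t : R) : R :=
  Rpower (3 - 2 * t) (- ((2 * lam + 3) / 2)).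

From Stdlib Require Import Reals Lra ClassicalEpsilon FunctionalExtensionality.
From Coquelicot Require Import Coquelicot.
Open Scope R_scope.

(* With [w = 1 + x], [z = 2 w / 5] and [s = (1 + t) / w], the substitution
   [t |-> (1 - z) s / (1 - z s)] maps [(-1, x)] onto [(0, 1)] and turns the integral defining
   [I^(gam-m-3/2)_+ g_(m,gam) (x)] into [w^(gam-1) (3 - 2x)^(-(gam-1/2)) / sqrt 5] times
   [B(gam - 1/2)], where [B(a) = int_0^1 s^(a-1) (1-s)^(-1/2) ds].
   It remains to show [B(a) = sqrt pi Gamma(a) / Gamma(a + 1/2)], which we do without Fubini.
   Integration by parts gives [Gamma(s+1) = s Gamma(s)] and [(a + 1/2) B(a+1) = a B(a)], so
   [R(a) = B(a) Gamma(a + 1/2) / Gamma(a)] has period 1. For [a <= b <= a + 1], the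
   log-convexity of Gamma (Cauchy-Schwarz) and the monotonicity of B bound [R(b)^2 / R(a)^2]
   within [1 +- O(1/(a+n))] after shifting both points by [n]; hence R is constant, and
   [R(1/2) R(1) = B(1/2) B(1) Gamma(3/2) / Gamma(1/2) = pi]. *)

(** * Limits near the ends of an interval *)

Definition near_lower (a d y : R) : Prop := a < y < a + d.

(* [d] is the size of a window at the upper end: [(b - d, b)] at a finite end,
   [(1/d, +oo)] at [+oo]. *)
Definition near_upper (b : Rbar) (d y : R) : Prop :=
  match b with
  | Finite b => b - d < y < b
  | p_infty => / d < y
  | m_infty => False
  end.

Definition lim_near (near : R -> R -> Prop) (F : R -> R) (L : R) : Prop :=
  forall eps, 0 < eps -> exists d, 0 < d /\ forall y, near d y -> Rabs (F y - L) < eps.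

Definition near_monotone (near : R -> R -> Prop) : Prop :=
  forall d d' y, 0 < d <= d' -> near d y -> near d' y.

Lemma near_lower_monotone a : near_monotone (near_lower a).
Proof. intros d d' y Hd [H1 H2]. split; lra. Qed.

Lemma near_upper_monotone b : near_monotone (near_upper b).
Proof.
intros d d' y Hd Hy. destruct b as [b| |]; simpl in *; try easy; try lra.
apply Rle_lt_trans with (/ d); auto. apply Rinv_le_contravar; lra.
Qed.

Lemma near_upper_lt b d y : near_upper b d y -> Rbar_lt y b.
Proof. destruct b as [b| |]; simpl; tauto || lra. Qed.

Lemma Rbar_lt_inner (a : R) (b : Rbar) : Rbar_lt a b -> exists c, a < c /\ Rbar_lt c b.
Proof.
destruct b as [b| |]; simpl; intros Hab; try easy.
- exists ((a + b) / 2). simpl. lra.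
- exists (a + 1). simpl. lra.
Qed.

Lemma near_upper_above (b : Rbar) (y0 : R) : Rbar_lt y0 b ->
  exists d, 0 < d /\ forall y, near_upper b d y -> y0 < y.
Proof.
destruct b as [b| |]; simpl; intros Hy0; try easy.
- exists (b - y0). split; intros; lra.
- assert (H := Rabs_pos y0). assert (H' := RRle_abs y0).
  exists (/ (Rabs y0 + 1)). split; [apply Rinv_0_lt_compat; lra|].
  intros y Hy. rewrite Rinv_inv in Hy. lra.
Qed.

Lemma near_upper_point (b : Rbar) (d y0 : R) : 0 < d -> Rbar_lt y0 b ->
  exists y, near_upper b d y /\ y0 < y.
Proof.
destruct b as [b| |]; simpl; intros Hd Hy0; try easy.
- exists (Rmax (b - d / 2) ((y0 + b) / 2)).
  assert (M := Rmax_l (b - d / 2) ((y0 + b) / 2)). assert (M' := Rmax_r (b - d / 2) ((y0 + b) / 2)).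
  assert (Rmax (b - d / 2) ((y0 + b) / 2) < b) by (apply Rmax_lub_lt; lra). lra.
- exists (Rmax (/ d) y0 + 1).
  assert (M := Rmax_l (/ d) y0). assert (M' := Rmax_r (/ d) y0). lra.
Qed.

Lemma near_ends_ordered (a : R) (b : Rbar) : Rbar_lt a b ->
  exists d0, 0 < d0 /\ forall d u v, 0 < d <= d0 ->
    near_lower a d u -> near_upper b d v -> u < v.
Proof.
destruct b as [b| |]; simpl; intros Hab; try easy.
- exists ((b - a) / 2). split; [lra|]. unfold near_lower. intros; lra.
- assert (H := Rabs_pos a). assert (H' := RRle_abs a).
  exists (Rmin 1 (/ (Rabs a + 2))). split; [apply Rmin_glb_lt; [lra|apply Rinv_0_lt_compat; lra]|].
  unfold near_lower. intros d u v [Hd Hd0] Hu Hv.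
  assert (Hinv : Rabs a + 2 <= / d).
  { rewrite <- (Rinv_inv (Rabs a + 2)). apply Rinv_le_contravar; [lra|].
    apply Rle_trans with (1 := Hd0), Rmin_r. }
  assert (d <= 1) by (apply Rle_trans with (1 := Hd0), Rmin_l). lra.
Qed.

Lemma lim_near_scal near F L k : lim_near near F L -> lim_near near (fun y => k * F y) (k * L).
Proof.
intros HF eps He.
destruct (HF (eps / (Rabs k + 1))) as [d [Hd K]].
{ apply Rdiv_lt_0_compat; [lra|]. generalize (Rabs_pos k); lra. }
exists d. split; auto. intros y Hy. specialize (K y Hy).
rewrite <- Rmult_minus_distr_l, Rabs_mult.
assert (Hk := Rabs_pos k). assert (Hb : 0 < eps / (Rabs k + 1)) by (apply Rdiv_lt_0_compat; lra).
apply Rle_lt_trans with (Rabs k * (eps / (Rabs k + 1))).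
- apply Rmult_le_compat_l; lra.
- replace eps with ((Rabs k + 1) * (eps / (Rabs k + 1))) at 2 by (field; lra). nra.
Qed.

Lemma lim_near_comp (near near' : R -> R -> Prop) F phi L : lim_near near F L ->
  (forall d, 0 < d -> exists d', 0 < d' /\ forall t, near' d' t -> near d (phi t)) ->
  lim_near near' (fun t => F (phi t)) L.
Proof.
intros HF Hphi eps He. destruct (HF eps He) as [d [Hd K]].
destruct (Hphi d Hd) as [d' [Hd' K']]. exists d'. split; auto.
Qed.

Lemma lim_near_squeeze near (G H : R -> R) d0 : near_monotone near -> 0 < d0 ->
  (forall y, near d0 y -> Rabs (G y) <= H y) -> lim_near near H 0 -> lim_near near G 0.
Proof.
intros Hmono Hd0 Hb HH eps He. destruct (HH eps He) as [d [Hd K]].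
exists (Rmin d d0). split; [apply Rmin_glb_lt; lra|]. intros y Hy.
assert (Hy1 : near d y) by (apply (Hmono (Rmin d d0)); auto; split; [apply Rmin_glb_lt|apply Rmin_l]; lra).
assert (Hy2 : near d0 y) by (apply (Hmono (Rmin d d0)); auto; split; [apply Rmin_glb_lt|apply Rmin_r]; lra).
specialize (K y Hy1). rewrite Rminus_0_r in *.
apply Rle_lt_trans with (H y); [apply Hb; auto|]. apply Rle_lt_trans with (2 := K), RRle_abs.
Qed.

Lemma lim_near_continuous near (F : R -> R) a L : continuous F a -> F a = L ->
  (forall d y, near d y -> Rabs (y - a) < d) -> lim_near near F L.
Proof.
intros Hc <- Hnear eps He.
destruct (proj1 (filterlim_locally F (F a)) Hc (mkposreal eps He)) as [d Hd].
exists d. split; [apply cond_pos|]. intros y Hy. apply (Hd y), (Hnear d y Hy).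
Qed.

Definition continuous_open (f : R -> R) (a : R) (b : Rbar) : Prop :=
  forall y, a < y -> Rbar_lt y b -> continuous f y.

Lemma between_open (a : R) (b : Rbar) (u v y : R) : a < u -> Rbar_lt v b -> u <= y <= v ->
  a < y /\ Rbar_lt y b.
Proof.
intros Hu Hv Hy. split; [lra|]. apply Rbar_le_lt_trans with v; [simpl; lra|exact Hv].
Qed.

Lemma ex_RInt_continuous_open f a b (u v : R) : continuous_open f a b ->
  a < u -> u <= v -> Rbar_lt v b -> ex_RInt f u v.
Proof.
intros Hc Hu Huv Hv. apply (@ex_RInt_continuous R_CompleteNormedModule).
rewrite Rmin_left, Rmax_right by lra. intros y Hy.
destruct (between_open a b u v y) as [H1 H2]; auto.
Qed.

Lemma RInt_primitive (f F : R -> R) u v : u <= v ->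
  (forall y, u <= y <= v -> is_derive F y (f y) /\ continuous f y) -> RInt f u v = F v - F u.
Proof.
intros Huv H. apply (@is_RInt_unique R_CompleteNormedModule).
apply (@is_RInt_derive R_CompleteNormedModule F f); rewrite Rmin_left, Rmax_right by lra;
  intros y Hy; apply H; auto.
Qed.

(** * Improper integrals *)

Definition improper (f : R -> R) (a : R) (b : Rbar) (L : R) : Prop :=
  (forall u v, a < u -> u <= v -> Rbar_lt v b -> ex_RInt f u v) /\
  (forall eps, 0 < eps -> exists d, 0 < d /\ forall u v,
     near_lower a d u -> near_upper b d v -> Rabs (RInt f u v - L) < eps).

Definition improper_primitive (f : R -> R) (a : R) (b : Rbar) (L : R) : Prop :=
  exists F La Lb, (forall y, a < y -> Rbar_lt y b -> is_derive F y (f y)) /\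
    lim_near (near_lower a) F La /\ lim_near (near_upper b) F Lb /\ L = Lb - La.

Section ImproperIntegral.
Variables (a : R) (b : Rbar).
Hypothesis Hab : Rbar_lt a b.

Lemma near_ends_points (d u0 v0 : R) : 0 < d -> a < u0 -> Rbar_lt v0 b ->
  exists u v, near_lower a d u /\ near_upper b d v /\ u < v /\ u < u0 /\ v0 < v.
Proof.
intros Hd Hu0 Hv0.
destruct (near_ends_ordered a b Hab) as [d0 [Hd0 Hord]].
set (d' := Rmin d d0).
assert (Hd' : 0 < d' <= d) by (split; [apply Rmin_glb_lt|apply Rmin_l]; lra).
assert (Hd'0 : d' <= d0) by apply Rmin_r.
destruct (near_upper_point b d' v0) as [v [Hv Hv0']]; try lra; auto.
set (u := a + Rmin d' (u0 - a) / 2).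
assert (Hm : 0 < Rmin d' (u0 - a)) by (apply Rmin_glb_lt; lra).
assert (Hm1 := Rmin_l d' (u0 - a)). assert (Hm2 := Rmin_r d' (u0 - a)).
assert (Hu : near_lower a d' u) by (unfold near_lower, u; lra).
exists u, v. repeat split; try (unfold u; lra).
- apply (near_upper_monotone b d'); auto.
- apply (Hord d'); auto; lra.
Qed.

Lemma improper_common_window f g L1 L2 eps : improper f a b L1 -> improper g a b L2 -> 0 < eps ->
  exists d, 0 < d /\ forall u v, near_lower a d u -> near_upper b d v ->
    Rabs (RInt f u v - L1) < eps /\ Rabs (RInt g u v - L2) < eps.
Proof.
intros [_ H1] [_ H2] He.
destruct (H1 eps He) as [d1 [Hd1 K1]]. destruct (H2 eps He) as [d2 [Hd2 K2]].
assert (Hd : 0 < Rmin d1 d2) by (apply Rmin_glb_lt; lra).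
exists (Rmin d1 d2). split; auto. intros u v Hu Hv. split.
- apply K1; [apply (near_lower_monotone a (Rmin d1 d2))|apply (near_upper_monotone b (Rmin d1 d2))];
    auto; split; auto; apply Rmin_l.
- apply K2; [apply (near_lower_monotone a (Rmin d1 d2))|apply (near_upper_monotone b (Rmin d1 d2))];
    auto; split; auto; apply Rmin_r.
Qed.

Lemma improper_joint_approx f g L1 L2 eps (u0 v0 : R) :
  improper f a b L1 -> improper g a b L2 -> 0 < eps -> a < u0 -> Rbar_lt v0 b ->
  exists u v, a < u < u0 /\ u < v /\ v0 < v /\ Rbar_lt v b /\
    Rabs (RInt f u v - L1) < eps /\ Rabs (RInt g u v - L2) < eps.
Proof.
intros Hf Hg He Hu0 Hv0.
destruct (improper_common_window f g L1 L2 eps Hf Hg He) as [d [Hd K]].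
destruct (near_ends_points d u0 v0) as [u [v [Hu [Hv [Huv [Hu' Hv']]]]]]; auto.
assert (Hvb := near_upper_lt b d v Hv).
exists u, v. destruct Hu. repeat split; auto; apply K; auto; split; lra.
Qed.

Lemma improper_unique f L1 L2 : improper f a b L1 -> improper f a b L2 -> L1 = L2.
Proof.
intros H1 H2. apply Rminus_diag_uniq, Rabs_eq_0, Rle_antisym; [|apply Rabs_pos].
apply le_epsilon. intros eps He. rewrite Rplus_0_l.
destruct (Rbar_lt_inner a b Hab) as [c [Hc1 Hc2]].
destruct (improper_joint_approx f f L1 L2 (eps / 2) c c H1 H2) as [u [v [_ [_ [_ [_ [K1 K2]]]]]]]; auto; try lra.
replace (L1 - L2) with ((RInt f u v - L2) - (RInt f u v - L1)) by ring.
eapply Rle_trans; [apply Rabs_triang|]. rewrite Rabs_Ropp. lra.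
Qed.

Lemma improper_le f g L1 L2 : improper f a b L1 -> improper g a b L2 ->
  (forall t, a < t -> Rbar_lt t b -> f t <= g t) -> L1 <= L2.
Proof.
intros H1 H2 Hle. apply le_epsilon. intros eps He.
destruct (Rbar_lt_inner a b Hab) as [c [Hc1 Hc2]].
destruct (improper_joint_approx f g L1 L2 (eps / 2) c c H1 H2) as [u [v [Hu [Huv [_ [Hv [K1 K2]]]]]]];
  auto; try lra.
assert (RInt f u v <= RInt g u v).
{ apply RInt_le; [lra|apply H1|apply H2|]; try lra; auto.
  intros t Ht. apply Hle; [lra|]. apply Rbar_lt_trans with v; simpl; auto; lra. }
apply Rabs_def2 in K1. apply Rabs_def2 in K2. lra.
Qed.

Lemma RInt_le_improper f L (u v : R) : improper f a b L -> (forall t, a < t -> Rbar_lt t b -> 0 <= f t) ->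
  a < u -> u <= v -> Rbar_lt v b -> RInt f u v <= L.
Proof.
intros HL Hpos Hu Huv Hv. apply le_epsilon. intros eps He.
destruct (improper_joint_approx f f L L eps u v HL HL) as [u' [v' [Hu' [Huv' [Hv' [Hvb [K _]]]]]]]; auto.
assert (Hint : forall p q : R, a < p -> p <= q -> q <= v' -> ex_RInt f p q)
  by (intros p q Hp Hpq Hq; apply (proj1 HL); auto; apply Rbar_le_lt_trans with v'; simpl; auto).
assert (Hsplit : RInt f u' v' = RInt f u' u + RInt f u v + RInt f v v').
{ assert (E1 := @RInt_Chasles R_CompleteNormedModule f u' u v (Hint u' u ltac:(lra) ltac:(lra) ltac:(lra))
                                                         (Hint u v ltac:(lra) ltac:(lra) ltac:(lra))).
  assert (E2 := @RInt_Chasles R_CompleteNormedModule f u' v v' (Hint u' v ltac:(lra) ltac:(lra) ltac:(lra))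
                                                          (Hint v v' ltac:(lra) ltac:(lra) ltac:(lra))).
  simpl in E1, E2. change plus with Rplus in E1, E2. lra. }
assert (Hge : forall p q : R, a < p -> p <= q -> q <= v' -> 0 <= RInt f p q).
{ intros p q Hp Hpq Hq. apply RInt_ge_0; auto. intros t Ht. apply Hpos; [lra|].
  apply Rbar_le_lt_trans with v'; simpl; auto; lra. }
assert (0 <= RInt f u' u) by (apply Hge; lra). assert (0 <= RInt f v v') by (apply Hge; lra).
apply Rabs_def2 in K. lra.
Qed.

Lemma improper_pos f L : improper f a b L -> continuous_open f a b ->
  (forall t, a < t -> Rbar_lt t b -> 0 < f t) -> 0 < L.
Proof.
intros HL Hc Hpos. destruct (Rbar_lt_inner a b Hab) as [c [Hc1 Hc2]].
assert (Hb : forall t, a < t <= c -> Rbar_lt t b)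
  by (intros t Ht; apply Rbar_le_lt_trans with c; simpl; auto; lra).
apply Rlt_le_trans with (RInt f ((a + c) / 2) c).
- apply RInt_gt_0; [lra| |]; intros t Ht; [apply Hpos|apply Hc]; try lra; apply Hb; lra.
- apply (RInt_le_improper f L); auto; try lra. intros; apply Rlt_le, Hpos; auto.
Qed.

Lemma RInt_lin (f g : R -> R) (u v p q : R) : ex_RInt f u v -> ex_RInt g u v ->
  RInt (fun t => p * f t + q * g t) u v = p * RInt f u v + q * RInt g u v.
Proof.
intros Hf Hg.
rewrite (@RInt_plus R_CompleteNormedModule (fun t => p * f t) (fun t => q * g t)).
- exact (f_equal2 Rplus (@RInt_scal R_CompleteNormedModule f u v p Hf)
                        (@RInt_scal R_CompleteNormedModule g u v q Hg)).
- exact (@ex_RInt_scal R_NormedModule f u v p Hf).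
- exact (@ex_RInt_scal R_NormedModule g u v q Hg).
Qed.

Lemma ex_RInt_lin (f g : R -> R) (u v p q : R) : ex_RInt f u v -> ex_RInt g u v ->
  ex_RInt (fun t => p * f t + q * g t) u v.
Proof.
intros Hf Hg. apply (@ex_RInt_plus R_NormedModule (fun t => p * f t) (fun t => q * g t)).
- exact (@ex_RInt_scal R_NormedModule f u v p Hf).
- exact (@ex_RInt_scal R_NormedModule g u v q Hg).
Qed.

Lemma improper_lin f g L1 L2 p q : improper f a b L1 -> improper g a b L2 ->
  improper (fun t => p * f t + q * g t) a b (p * L1 + q * L2).
Proof.
intros Hf Hg. split.
{ intros u v Hu Huv Hv. apply ex_RInt_lin; [apply Hf|apply Hg]; auto. }
intros eps He.
assert (Hp := Rabs_pos p). assert (Hq := Rabs_pos q).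
set (e := eps / (Rabs p + Rabs q + 1)).
assert (He' : 0 < e) by (apply Rdiv_lt_0_compat; lra).
destruct (improper_common_window f g L1 L2 e Hf Hg He') as [d [Hd K]].
destruct (near_ends_ordered a b Hab) as [d0 [Hd0 Hord]].
set (d' := Rmin d d0).
assert (Hd' : 0 < d') by (apply Rmin_glb_lt; lra).
exists d'. split; auto. intros u v Hu Hv.
assert (Huv : u < v) by (apply (Hord d'); auto; split; [lra|apply Rmin_r]).
assert (Hu' := near_lower_monotone a d' d u (conj Hd' (Rmin_l d d0)) Hu).
assert (Hv' := near_upper_monotone b d' d v (conj Hd' (Rmin_l d d0)) Hv).
destruct (K u v Hu' Hv') as [K1 K2]. destruct Hu as [Hu _].
assert (Hvb := near_upper_lt b d' v Hv).
rewrite RInt_lin by ((apply Hf || apply Hg); auto; lra).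
replace (p * RInt f u v + q * RInt g u v - (p * L1 + q * L2))
  with (p * (RInt f u v - L1) + q * (RInt g u v - L2)) by ring.
eapply Rle_lt_trans; [apply Rabs_triang|]. rewrite !Rabs_mult.
apply Rle_lt_trans with ((Rabs p + Rabs q) * e).
- rewrite Rmult_plus_distr_r. apply Rplus_le_compat; apply Rmult_le_compat_l; lra.
- replace eps with ((Rabs p + Rabs q + 1) * e) by (unfold e; field; lra). nra.
Qed.

Lemma improper_of_primitive f L : continuous_open f a b -> improper_primitive f a b L -> improper f a b L.
Proof.
intros Hc [F [La [Lb [HF [HLa [HLb ->]]]]]]. split.
{ intros u v Hu Huv Hv. apply (ex_RInt_continuous_open f a b); auto. }
intros eps He.
destruct (HLa (eps / 2)) as [d1 [Hd1 K1]]; [lra|]. destruct (HLb (eps / 2)) as [d2 [Hd2 K2]]; [lra|].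
destruct (near_ends_ordered a b Hab) as [d0 [Hd0 Hord]].
set (d := Rmin (Rmin d1 d2) d0).
assert (Hd : 0 < d) by (apply Rmin_glb_lt; [apply Rmin_glb_lt|]; lra).
assert (Hdd : d <= Rmin d1 d2 /\ d <= d0) by (split; [apply Rmin_l|apply Rmin_r]).
assert (Hm := Rmin_l d1 d2). assert (Hm' := Rmin_r d1 d2).
exists d. split; auto. intros u v Hu Hv.
assert (Huv : u < v) by (apply (Hord d); auto; lra).
rewrite (RInt_primitive f F u v) by
  (lra || (intros y Hy; destruct (between_open a b u v y) as [Hy1 Hy2];
           [apply Hu|apply (near_upper_lt b d v Hv)|auto|split; [apply HF|apply Hc]; auto])).
specialize (K1 u (near_lower_monotone a d d1 u ltac:(lra) Hu)).
specialize (K2 v (near_upper_monotone b d d2 v ltac:(lra) Hv)).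
replace (F v - F u - (Lb - La)) with ((F v - Lb) - (F u - La)) by ring.
eapply Rle_lt_trans; [apply Rabs_triang|]. rewrite Rabs_Ropp. lra.
Qed.

Lemma lim_lower_of_monotone (F : R -> R) (c m : R) : a < c ->
  (forall y z, a < y -> y <= z -> z < c -> F y <= F z) -> (forall y, a < y < c -> m <= F y) ->
  exists L, lim_near (near_lower a) F L.
Proof.
intros Hac Hmono Hm.
set (E := fun r => exists y, a < y < c /\ r = - F y).
destruct (completeness E) as [S [HS1 HS2]].
- exists (- m). intros r [y [Hy ->]]. specialize (Hm y Hy). lra.
- exists (- F ((a + c) / 2)), ((a + c) / 2). split; auto; lra.
- exists (- S). intros eps He.
  assert (exists y0, a < y0 < c /\ S - eps < - F y0) as [y0 [Hy0 Hf]].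
  { apply NNPP. intro N. assert (S <= S - eps); [|lra].
    apply HS2. intros r [y [Hy ->]]. apply Rnot_lt_le. intro C. apply N. exists y; auto. }
  exists (y0 - a). split; [lra|]. intros y [Hy1 Hy2].
  assert (F y <= F y0) by (apply Hmono; lra).
  assert (- F y <= S) by (apply HS1; exists y; split; auto; lra).
  apply Rabs_def1; lra.
Qed.

Lemma lim_upper_of_monotone (F : R -> R) (c M : R) : Rbar_lt c b ->
  (forall y z, c < y -> y <= z -> Rbar_lt z b -> F y <= F z) ->
  (forall y, c < y -> Rbar_lt y b -> F y <= M) -> exists L, lim_near (near_upper b) F L.
Proof.
intros Hcb Hmono HM.
set (E := fun r => exists y, c < y /\ Rbar_lt y b /\ r = F y).
destruct (Rbar_lt_inner c b Hcb) as [c' [Hc' Hc'b]].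
destruct (completeness E) as [S [HS1 HS2]].
- exists M. intros r [y [Hy [Hyb ->]]]. auto.
- exists (F c'), c'. auto.
- exists S. intros eps He.
  assert (exists y0, c < y0 /\ Rbar_lt y0 b /\ S - eps < F y0) as [y0 [Hy0 [Hy0b Hf]]].
  { apply NNPP. intro N. assert (S <= S - eps); [|lra].
    apply HS2. intros r [y [Hy [Hyb ->]]]. apply Rnot_lt_le. intro C. apply N. exists y; auto. }
  destruct (near_upper_above b y0 Hy0b) as [d [Hd Hnear]].
  exists d. split; auto. intros y Hy.
  assert (Hyy0 := Hnear y Hy). assert (Hyb := near_upper_lt b d y Hy).
  assert (F y0 <= F y) by (apply Hmono; auto; lra).
  assert (F y <= S) by (apply HS1; exists y; repeat split; auto; lra).
  apply Rabs_def1; lra.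
Qed.

Lemma open_neighbourhood (y : R) : a < y -> Rbar_lt y b ->
  exists r, 0 < r /\ forall z, Rabs (z - y) < r -> a < z /\ Rbar_lt z b.
Proof.
intros Hy Hyb. destruct b as [b'| |]; simpl in Hyb; try easy.
- exists (Rmin (y - a) (b' - y)). split; [apply Rmin_glb_lt; lra|].
  intros z Hz. assert (Hm1 := Rmin_l (y - a) (b' - y)). assert (Hm2 := Rmin_r (y - a) (b' - y)).
  apply Rabs_def2 in Hz. simpl. lra.
- exists (y - a). split; [lra|]. intros z Hz. apply Rabs_def2 in Hz. simpl. lra.
Qed.

Lemma ex_RInt_open f (u v : R) : continuous_open f a b ->
  a < u -> Rbar_lt u b -> a < v -> Rbar_lt v b -> ex_RInt f u v.
Proof.
intros Hc Hu Hub Hv Hvb. destruct (Rle_lt_dec u v).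
- apply (ex_RInt_continuous_open f a b); auto.
- apply (@ex_RInt_swap R_CompleteNormedModule). apply (ex_RInt_continuous_open f a b); auto; lra.
Qed.

Lemma RInt_Chasles_open f (u v w : R) : continuous_open f a b ->
  a < u -> Rbar_lt u b -> a < v -> Rbar_lt v b -> a < w -> Rbar_lt w b ->
  RInt f u v + RInt f v w = RInt f u w.
Proof.
intros Hc Hu Hub Hv Hvb Hw Hwb.
exact (@RInt_Chasles R_CompleteNormedModule f u v w (ex_RInt_open f u v Hc Hu Hub Hv Hvb)
                                                   (ex_RInt_open f v w Hc Hv Hvb Hw Hwb)).
Qed.

Lemma is_derive_RInt_open f (c : R) : continuous_open f a b -> a < c -> Rbar_lt c b ->
  forall y, a < y -> Rbar_lt y b -> is_derive (fun z => RInt f c z) y (f y).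
Proof.
intros Hc Hca Hcb y Hy Hyb.
apply (@is_derive_RInt R_NormedModule f (fun z => RInt f c z) c y); [|apply Hc; auto].
destruct (open_neighbourhood y Hy Hyb) as [r [Hr Hball]].
exists (mkposreal r Hr). intros z Hz. apply (@RInt_correct R_CompleteNormedModule).
destruct (Hball z Hz). apply ex_RInt_open; auto.
Qed.

(* For a nonnegative integrand the indefinite integral from an interior point is monotone,
   so bounded partial integrals give it limits at both ends. *)
Lemma improper_primitive_of_bounded f M : continuous_open f a b ->
  (forall t, a < t -> Rbar_lt t b -> 0 <= f t) ->
  (forall u v : R, a < u -> u <= v -> Rbar_lt v b -> RInt f u v <= M) ->
  exists L, improper_primitive f a b L.
Proof.
intros Hc Hpos Hbound.
destruct (Rbar_lt_inner a b Hab) as [c [Hca Hcb]].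
set (F := fun z => RInt f c z).
assert (Hlt : forall y z : R, y <= z -> Rbar_lt z b -> Rbar_lt y b)
  by (intros y z Hyz Hz; apply Rbar_le_lt_trans with z; simpl; auto).
assert (Hmono : forall y z : R, a < y -> y <= z -> Rbar_lt z b -> F y <= F z).
{ intros y z Hy Hyz Hz. unfold F.
  rewrite <- (RInt_Chasles_open f c y z Hc) by (eauto || lra).
  assert (0 <= RInt f y z); [|lra].
  apply RInt_ge_0; auto. apply (ex_RInt_continuous_open f a b); auto.
  intros t Ht. apply Hpos; [lra|]. apply Hlt with z; auto; lra. }
destruct (lim_upper_of_monotone F c M Hcb) as [Lb HLb].
- intros y z Hy Hyz Hz. apply Hmono; auto; lra.
- intros y Hy Hyb. apply Hbound; auto; lra.
destruct (lim_lower_of_monotone F c (- M) Hca) as [La HLa].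
- intros y z Hy Hyz Hz. apply Hmono; auto. apply Hlt with c; auto; lra.
- intros y Hy. assert (Hyb : Rbar_lt y b) by (apply Hlt with c; auto; lra).
  assert (E := RInt_Chasles_open f c y c Hc Hca Hcb (proj1 Hy) Hyb Hca Hcb).
  rewrite (@RInt_point R_CompleteNormedModule) in E.
  assert (RInt f y c <= M) by (apply Hbound; auto; lra).
  unfold F. change zero with 0 in E. lra.
exists (Lb - La), F, La, Lb. split; [|split; [|split]]; auto.
intros y Hy Hyb. apply is_derive_RInt_open; auto.
Qed.

End ImproperIntegral.

Lemma improper_primitive_scal f (a : R) (b : Rbar) L k :
  improper_primitive f a b L -> improper_primitive (fun t => k * f t) a b (k * L).
Proof.
intros [F [La [Lb [HF [HLa [HLb ->]]]]]].
exists (fun t => k * F t), (k * La), (k * Lb). split; [|split; [|split]].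
- intros y Hy Hyb. apply is_derive_scal; auto.
- apply lim_near_scal; auto.
- apply lim_near_scal; auto.
- ring.
Qed.

Lemma improper_primitive_comp f phi phi' (a c : R) (b e : Rbar) L :
  improper_primitive f a b L ->
  (forall t, c < t -> Rbar_lt t e -> is_derive phi t (phi' t) /\ a < phi t /\ Rbar_lt (phi t) b) ->
  (forall d, 0 < d -> exists d', 0 < d' /\ forall t, near_lower c d' t -> near_lower a d (phi t)) ->
  (forall d, 0 < d -> exists d', 0 < d' /\ forall t, near_upper e d' t -> near_upper b d (phi t)) ->
  improper_primitive (fun t => phi' t * f (phi t)) c e L.
Proof.
intros [F [La [Lb [HF [HLa [HLb ->]]]]]] Hphi Hlo Hup.
exists (fun t => F (phi t)), La, Lb. split; [|split; [|split]]; auto.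
- intros t Ht Hte. destruct (Hphi t Ht Hte) as [Hd [H1 H2]].
  apply (is_derive_comp F phi t); auto.
- apply (lim_near_comp (near_lower a)); auto.
- apply (lim_near_comp (near_upper b)); auto.
Qed.

Lemma improper_primitive_ext f g (a : R) (b : Rbar) L :
  (forall t, a < t -> Rbar_lt t b -> f t = g t) -> improper_primitive f a b L -> improper_primitive g a b L.
Proof.
intros Hfg [F [La [Lb [HF HL]]]]. exists F, La, Lb. split; auto.
intros y Hy Hyb. rewrite <- Hfg; auto.
Qed.

Lemma improper_int_ab_of_improper f (a b L : R) : improper f a b L -> improper_int_ab f a b L.
Proof.
intros [Hex H]. split.
- intros u v Hu Huv Hv. constructor. apply ex_RInt_Reals_0, Hex; auto.
- intros eps He. destruct (H eps He) as [d [Hd K]]. exists d. split; [lra|].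
  intros u v pr Hu1 Hu2 Hv1 Hv2. rewrite <- (RInt_Reals f u v pr). apply K; split; lra.
Qed.

Lemma improper_int_a_inf_of_improper f (a L : R) : improper f a p_infty L -> improper_int_a_inf f a L.
Proof.
intros [Hex H]. split.
- intros u v Hu Huv. constructor. apply ex_RInt_Reals_0, Hex; simpl; auto.
- intros eps He. destruct (H eps He) as [d [Hd K]]. exists d, (/ d). split; [lra|].
  intros u v pr Hu1 Hu2 Hv. rewrite <- (RInt_Reals f u v pr). apply K; [split|simpl]; auto.
Qed.

Lemma improper_of_improper_int_a_inf f (a L : R) : improper_int_a_inf f a L -> improper f a p_infty L.
Proof.
intros [Hex H]. split.
- intros u v Hu Huv _. destruct (Hex u v Hu Huv) as [pr]. apply ex_RInt_Reals_1; auto.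
- intros eps He. destruct (H eps He) as [delta [M [Hdelta K]]].
  destruct (near_ends_ordered a p_infty I) as [d0 [Hd0 Hord]].
  assert (HM := Rabs_pos M). assert (HM' := RRle_abs M).
  set (d := Rmin (Rmin delta d0) (/ (Rabs M + 1))).
  assert (Hd : 0 < d) by (apply Rmin_glb_lt; [apply Rmin_glb_lt|apply Rinv_0_lt_compat]; lra).
  assert (Hd1 : d <= Rmin delta d0) by apply Rmin_l.
  assert (Hd2 : d <= / (Rabs M + 1)) by apply Rmin_r.
  assert (Hm1 := Rmin_l delta d0). assert (Hm2 := Rmin_r delta d0).
  exists d. split; auto. intros u v Hu Hv.
  assert (Huv : u < v) by (apply (Hord d); auto; lra).
  assert (HMv : M < v).
  { simpl in Hv. apply Rlt_le_trans with (Rabs M + 1); [lra|].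
    apply Rle_trans with (/ d); [|lra]. rewrite <- (Rinv_inv (Rabs M + 1)).
    apply Rinv_le_contravar; lra. }
  destruct Hu as [Hu1 Hu2]. destruct (Hex u v Hu1 ltac:(lra)) as [pr].
  rewrite (RInt_Reals f u v pr). apply K; lra.
Qed.

Lemma Rpower_pos x y : 0 < Rpower x y.
Proof. apply exp_pos. Qed.

Lemma Rpower_le_1 x p : 0 < x <= 1 -> 0 <= p -> Rpower x p <= 1.
Proof.
intros Hx Hp. replace 1 with (Rpower 1 p) by (unfold Rpower; rewrite ln_1, Rmult_0_r, exp_0; auto).
apply Rle_Rpower_l; auto; lra.
Qed.

Lemma Rpower_antitone x p q : 0 < x <= 1 -> p <= q -> Rpower x q <= Rpower x p.
Proof.
intros Hx Hpq. replace q with (p + (q - p)) by ring. rewrite Rpower_plus.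
assert (Rpower x (q - p) <= 1) by (apply Rpower_le_1; lra).
assert (0 < Rpower x p) by apply Rpower_pos. nra.
Qed.

Lemma Rpower_pred t s : 0 < t -> Rpower t (s - 1) = Rpower t s / t.
Proof.
intros Ht. unfold Rpower. replace ((s - 1) * ln t) with (s * ln t + - ln t) by ring.
rewrite exp_plus, exp_Ropp, exp_ln; auto.
Qed.

Lemma lim_Rpower_0 p : 0 < p -> lim_near (near_lower 0) (fun t => Rpower t p) 0.
Proof.
intros Hp eps He. exists (Rpower eps (/ p)). split; [apply Rpower_pos|].
intros y [Hy1 Hy2]. rewrite Rminus_0_r, Rabs_pos_eq by (apply Rlt_le, Rpower_pos).
replace eps with (Rpower (Rpower eps (/ p)) p).
- apply Rlt_Rpower_l; auto; lra.
- rewrite Rpower_mult. replace (/ p * p) with 1 by (field; lra). apply Rpower_1; auto.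
Qed.

Lemma lim_Rpower_1 p : 0 < p -> lim_near (near_upper 1) (fun t => Rpower (1 - t) p) 0.
Proof.
intros Hp. apply (lim_near_comp (near_lower 0) _ (fun t => Rpower t p) (fun t => 1 - t));
  [apply lim_Rpower_0; auto|].
intros d Hd. exists d. split; auto. intros t Ht. simpl in Ht. split; lra.
Qed.

Lemma lim_Rpower_inv_pinfty k p : 0 < k -> 0 < p ->
  lim_near (near_upper p_infty) (fun y => Rpower (k / y) p) 0.
Proof.
intros Hk Hp. apply (lim_near_comp (near_lower 0) _ (fun t => Rpower t p) (fun y => k / y));
  [apply lim_Rpower_0; auto|].
intros d Hd. exists (d / k). split; [apply Rdiv_lt_0_compat; auto|].
intros y Hy. simpl in Hy. rewrite Rinv_div in Hy.
assert (Hy0 : 0 < y) by (apply Rlt_trans with (k / d); auto; apply Rdiv_lt_0_compat; auto).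
split; [apply Rdiv_lt_0_compat; lra|].
rewrite Rplus_0_l. apply Rmult_lt_reg_r with (y / d); [apply Rdiv_lt_0_compat; auto|].
replace (k / y * (y / d)) with (k / d) by (field; lra).
replace (d * (y / d)) with y by (field; lra). auto.
Qed.

Lemma sq_lt_4_exp y : 0 < y -> y * y < 4 * exp y.
Proof.
intros Hy. replace y with (y / 2 + y / 2) at 3 by field. rewrite exp_plus.
assert (H := exp_ineq1 (y / 2) ltac:(lra)). nra.
Qed.

Lemma Rpower_mul_exp_bound p y : 0 < p -> 0 < y -> Rpower y p * exp (- y) <= Rpower (4 * p ^ 2 / y) p.
Proof.
intros Hp Hy.
replace (exp (- y)) with (Rpower (exp (- (y / p))) p)
  by (unfold Rpower; rewrite ln_exp; f_equal; field; lra).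
rewrite Rpower_mult_distr by (auto; apply exp_pos).
apply Rle_Rpower_l; [lra|]. split.
- apply Rmult_lt_0_compat; auto; apply exp_pos.
- assert (H := sq_lt_4_exp (y / p) ltac:(apply Rdiv_lt_0_compat; lra)).
  assert (He := exp_pos (y / p)).
  rewrite exp_Ropp. apply Rmult_le_reg_r with (exp (y / p) * y); [nra|].
  replace (y * / exp (y / p) * (exp (y / p) * y)) with (y * y) by (field; lra).
  replace (4 * p ^ 2 / y * (exp (y / p) * y)) with (p * p * (4 * exp (y / p))) by (field; lra).
  replace (y * y) with (p * p * (y / p * (y / p))) by (field; lra).
  apply Rmult_le_compat_l; [nra|lra].
Qed.

Lemma quadratic_nonneg_discriminant A B C : 0 <= B ->
  (forall l, 0 <= A - 2 * l * C + l * l * B) -> C ^ 2 <= A * B.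
Proof.
intros HB Q. destruct (Rle_lt_or_eq_dec 0 B HB) as [HBp|HB0].
- specialize (Q (C / B)).
  replace (A - 2 * (C / B) * C + C / B * (C / B) * B) with ((A * B - C ^ 2) / B) in Q by (field; lra).
  apply Rmult_le_compat_r with (r := B) in Q; [|lra].
  replace ((A * B - C ^ 2) / B * B) with (A * B - C ^ 2) in Q by (field; lra). lra.
- subst B. destruct (Req_dec C 0) as [->|HC]; [lra|].
  specialize (Q ((A + 1) / (2 * C))).
  replace (A - 2 * ((A + 1) / (2 * C)) * C + (A + 1) / (2 * C) * ((A + 1) / (2 * C)) * 0)
    with (-1) in Q by (field; auto). lra.
Qed.

Lemma RInt_Cauchy_Schwarz (g h : R -> R) u v : u <= v ->
  (forall t, u <= t <= v -> continuous g t /\ continuous h t) ->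
  RInt (fun t => g t * h t) u v ^ 2 <= RInt (fun t => g t * g t) u v * RInt (fun t => h t * h t) u v.
Proof.
intros Huv Hc.
assert (Hex : forall p q : R -> R, (forall t, u <= t <= v -> continuous p t /\ continuous q t) ->
                ex_RInt (fun t => p t * q t) u v).
{ intros p q Hpq. apply (@ex_RInt_continuous R_CompleteNormedModule).
  rewrite Rmin_left, Rmax_right by lra. intros t Ht.
  apply (@continuous_mult R_UniformSpace R_AbsRing); apply Hpq; auto. }
assert (Egg : ex_RInt (fun t => g t * g t) u v) by (apply Hex; intros t Ht; split; apply Hc; auto).
assert (Ehh : ex_RInt (fun t => h t * h t) u v) by (apply Hex; intros t Ht; split; apply Hc; auto).
assert (Egh : ex_RInt (fun t => g t * h t) u v) by (apply Hex; auto).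
apply quadratic_nonneg_discriminant.
- apply RInt_ge_0; auto. intros; nra.
- intros l.
  assert (E1 := ex_RInt_lin _ _ u v 1 (- 2 * l) Egg Egh).
  match goal with |- 0 <= ?A - 2 * l * ?C + l * l * ?B =>
    replace (A - 2 * l * C + l * l * B) with (1 * (1 * A + (- 2 * l) * C) + (l * l) * B) by ring end.
  rewrite <- (RInt_lin _ _ u v 1 (- 2 * l)), <- (RInt_lin _ _ u v 1 (l * l)) by auto.
  apply RInt_ge_0; [lra|apply ex_RInt_lin; auto|]. intros t _.
  replace (1 * (1 * (g t * g t) + - 2 * l * (g t * h t)) + l * l * (h t * h t))
    with ((g t - l * h t) ^ 2) by ring.
  apply pow2_ge_0.
Qed.

(** * The Gamma function *)

Definition Gamma_integrand (s t : R) : R := Rpower t (s - 1) * exp (- t).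

Lemma Gamma_integrand_pos s t : 0 < Gamma_integrand s t.
Proof. apply Rmult_lt_0_compat; [apply Rpower_pos|apply exp_pos]. Qed.

Lemma Gamma_integrand_continuous s : continuous_open (Gamma_integrand s) 0 p_infty.
Proof.
intros t Ht _. apply (@ex_derive_continuous R_AbsRing R_NormedModule).
unfold Gamma_integrand, Rpower. auto_derive. lra.
Qed.

(* [t^(s-1) e^(-t) <= K t^(s-1) (1+t)^(-(s+1))], whose primitive [K (t/(1+t))^s / s] is bounded. *)
Lemma Gamma_integrand_le_majorant s t : 0 < s -> 0 < t ->
  Gamma_integrand s t <=
  exp 1 * Rpower (4 * (s + 1) ^ 2) (s + 1) * (Rpower t (s - 1) * Rpower (1 + t) (- (s + 1))).
Proof.
intros Hs Ht. set (K := exp 1 * Rpower (4 * (s + 1) ^ 2) (s + 1)).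
assert (B : Rpower (1 + t) (s + 1) * exp (- t) <= K).
{ replace (exp (- t)) with (exp 1 * exp (- (1 + t))) by (rewrite <- exp_plus; f_equal; ring).
  unfold K. replace (Rpower (1 + t) (s + 1) * (exp 1 * exp (- (1 + t)))) with
    (exp 1 * (Rpower (1 + t) (s + 1) * exp (- (1 + t)))) by ring.
  apply Rmult_le_compat_l; [apply Rlt_le, exp_pos|].
  eapply Rle_trans; [apply Rpower_mul_exp_bound; lra|].
  apply Rle_Rpower_l; [lra|]. split.
  - apply Rdiv_lt_0_compat; [nra|lra].
  - apply Rmult_le_reg_r with (1 + t); [lra|]. field_simplify; try lra. nra. }
unfold Gamma_integrand. rewrite Rpower_Ropp.
assert (0 < Rpower (1 + t) (s + 1)) by apply Rpower_pos.
assert (0 < Rpower t (s - 1)) by apply Rpower_pos.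
apply Rmult_le_reg_r with (Rpower (1 + t) (s + 1)); auto.
replace (K * (Rpower t (s - 1) * / Rpower (1 + t) (s + 1)) * Rpower (1 + t) (s + 1))
  with (Rpower t (s - 1) * K) by (field; lra).
replace (Rpower t (s - 1) * exp (- t) * Rpower (1 + t) (s + 1)) with
  (Rpower t (s - 1) * (Rpower (1 + t) (s + 1) * exp (- t))) by ring.
apply Rmult_le_compat_l; lra.
Qed.

Lemma Gamma_partial_integral_bound s : 0 < s -> exists M,
  forall u v : R, 0 < u -> u <= v -> RInt (Gamma_integrand s) u v <= M.
Proof.
intros Hs.
set (K := exp 1 * Rpower (4 * (s + 1) ^ 2) (s + 1)).
assert (HK : 0 < K) by (apply Rmult_lt_0_compat; [apply exp_pos|apply Rpower_pos]).
set (mg := fun t => K * (Rpower t (s - 1) * Rpower (1 + t) (- (s + 1)))).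
set (Mg := fun t => K * (Rpower t s * Rpower (1 + t) (- s)) / s).
assert (HMg : forall t, 0 < t -> 0 <= Mg t <= K / s).
{ intros t Ht.
  assert (E : Rpower t s * Rpower (1 + t) (- s) = Rpower (t / (1 + t)) s).
  { unfold Rpower. rewrite <- exp_plus, ln_div by lra. f_equal. ring. }
  assert (Rpower (t / (1 + t)) s <= 1).
  { apply Rpower_le_1; [|lra]. split; [apply Rdiv_lt_0_compat; lra|].
    apply Rmult_le_reg_r with (1 + t); [lra|]. field_simplify; lra. }
  assert (0 < Rpower (t / (1 + t)) s) by apply Rpower_pos.
  unfold Mg. rewrite E. split; [apply Rlt_le, Rdiv_lt_0_compat; nra|].
  apply Rmult_le_compat_r; [apply Rlt_le, Rinv_0_lt_compat; lra|nra]. }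
assert (HD : forall t, 0 < t -> is_derive Mg t (mg t) /\ continuous mg t).
{ intros t Ht. split.
  - unfold Mg, mg, Rpower. auto_derive; [lra|].
    replace ((s - 1) * ln t) with (s * ln t + - ln t) by ring.
    replace (- (s + 1) * ln (1 + t)) with (- s * ln (1 + t) + - ln (1 + t)) by ring.
    rewrite !exp_plus, !exp_Ropp, !exp_ln by lra. field. lra.
  - apply (@ex_derive_continuous R_AbsRing R_NormedModule). unfold mg, Rpower. auto_derive. lra. }
exists (K / s). intros u v Hu Huv.
apply Rle_trans with (RInt mg u v).
- apply RInt_le; auto.
  + apply (ex_RInt_continuous_open _ 0 p_infty); simpl; auto. apply Gamma_integrand_continuous.
  + apply (@ex_RInt_continuous R_CompleteNormedModule).
    rewrite Rmin_left, Rmax_right by lra. intros t Ht. apply HD. lra.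
  + intros t Ht. apply Gamma_integrand_le_majorant; lra.
- rewrite (RInt_primitive mg Mg) by (auto; intros y Hy; apply HD; lra).
  assert (H1 := HMg u Hu). assert (H2 := HMg v ltac:(lra)). lra.
Qed.

Lemma Gamma_improper s : 0 < s -> improper (Gamma_integrand s) 0 p_infty (Gamma s).
Proof.
intros Hs. apply improper_of_improper_int_a_inf. unfold Gamma. apply epsilon_spec.
destruct (Gamma_partial_integral_bound s Hs) as [M HM].
destruct (improper_primitive_of_bounded 0 p_infty I (Gamma_integrand s) M) as [L HL].
- apply Gamma_integrand_continuous.
- intros; apply Rlt_le, Gamma_integrand_pos.
- intros u v Hu Huv _. apply HM; auto.
- exists L. apply improper_int_a_inf_of_improper, improper_of_primitive; simpl; auto.
  apply Gamma_integrand_continuous.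
Qed.

Lemma Gamma_pos s : 0 < s -> 0 < Gamma s.
Proof.
intros Hs. apply (improper_pos 0 p_infty I (Gamma_integrand s)).
- apply Gamma_improper; auto.
- apply Gamma_integrand_continuous.
- intros; apply Gamma_integrand_pos.
Qed.

(* Integration by parts: [d/dt (- t^s e^(-t)) = t^s e^(-t) - s t^(s-1) e^(-t)]. *)
Lemma Gamma_succ s : 0 < s -> Gamma (s + 1) = s * Gamma s.
Proof.
intros Hs.
set (F := fun t => - (Rpower t s * exp (- t))).
assert (HF0 : forall t, 0 < t -> Rabs (F t) = Rpower t s * exp (- t)).
{ intros t Ht. unfold F. rewrite Rabs_Ropp, Rabs_pos_eq; [auto|].
  apply Rlt_le, Rmult_lt_0_compat; [apply Rpower_pos|apply exp_pos]. }
assert (Hprim : improper_primitive (fun t => 1 * Gamma_integrand (s + 1) t + (- s) * Gamma_integrand s t)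
                  0 p_infty (0 - 0)).
{ exists F, 0, 0. split; [|split; [|split]]; auto.
  - intros y Hy _. unfold F, Gamma_integrand. replace (s + 1 - 1) with s by ring.
    rewrite Rpower_pred by auto. unfold Rpower. auto_derive; [lra|]. field. lra.
  - apply lim_near_squeeze with (fun t => Rpower t s) 1; [apply near_lower_monotone|lra| |].
    + intros y [Hy _]. rewrite HF0 by lra.
      assert (exp (- y) <= 1) by (rewrite <- exp_0; apply Rlt_le, exp_increasing; lra).
      assert (0 < Rpower y s) by apply Rpower_pos. nra.
    + apply lim_Rpower_0; auto.
  - apply lim_near_squeeze with (fun t => Rpower (4 * s ^ 2 / t) s) 1;
      [apply near_upper_monotone|lra| |].
    + intros y Hy. simpl in Hy. rewrite Rinv_1 in Hy. rewrite HF0 by lra.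
      apply Rpower_mul_exp_bound; lra.
    + apply lim_Rpower_inv_pinfty; auto. nra. }
apply improper_of_primitive in Hprim; [|simpl; auto|].
- assert (Hlin := improper_lin 0 p_infty I _ _ _ _ 1 (- s)
                   (Gamma_improper (s + 1) ltac:(lra)) (Gamma_improper s Hs)).
  assert (E := improper_unique 0 p_infty I _ _ _ Hprim Hlin). lra.
- intros y Hy _. apply (@ex_derive_continuous R_AbsRing R_NormedModule).
  unfold Gamma_integrand, Rpower. auto_derive. lra.
Qed.

Lemma RInt_Gamma_integrand_bounds r (u v : R) : 0 < r -> 0 < u -> u <= v ->
  0 <= RInt (Gamma_integrand r) u v <= Gamma r.
Proof.
intros Hr Hu Huv. split.
- apply RInt_ge_0; [lra| |intros; apply Rlt_le, Gamma_integrand_pos].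
  apply (proj1 (Gamma_improper r Hr)); simpl; auto; lra.
- apply (RInt_le_improper 0 p_infty I); simpl; auto; try lra.
  + apply Gamma_improper; auto.
  + intros; apply Rlt_le, Gamma_integrand_pos.
Qed.

(* Cauchy-Schwarz for [t^((s-1)/2) e^(-t/2)] and [t^(s/2) e^(-t/2)]. *)
Lemma RInt_Gamma_integrand_log_convex s (u v : R) : 0 < u -> u <= v ->
  RInt (Gamma_integrand (s + / 2)) u v ^ 2 <=
  RInt (Gamma_integrand s) u v * RInt (Gamma_integrand (s + 1)) u v.
Proof.
intros Hu Huv.
set (g := fun t => Rpower t ((s - 1) / 2) * exp (- t / 2)).
set (h := fun t => Rpower t (s / 2) * exp (- t / 2)).
assert (X := RInt_Cauchy_Schwarz g h u v Huv).
rewrite (@RInt_ext R_CompleteNormedModule (fun t => g t * h t) (Gamma_integrand (s + / 2))) in X.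
rewrite (@RInt_ext R_CompleteNormedModule (fun t => g t * g t) (Gamma_integrand s)) in X.
rewrite (@RInt_ext R_CompleteNormedModule (fun t => h t * h t) (Gamma_integrand (s + 1))) in X.
- apply X; intros t Ht; split; apply (@ex_derive_continuous R_AbsRing R_NormedModule);
    unfold g, h, Rpower; auto_derive; lra.
- intros; unfold h, Gamma_integrand, Rpower. rewrite <- !exp_plus. f_equal. field.
- intros; unfold g, Gamma_integrand, Rpower. rewrite <- !exp_plus. f_equal. field.
- intros; unfold g, h, Gamma_integrand, Rpower. rewrite <- !exp_plus. f_equal. field.
Qed.

Lemma Gamma_half_log_convex s : 0 < s -> Gamma (s + / 2) ^ 2 <= Gamma s * Gamma (s + 1).
Proof.
intros Hs. assert (P1 := Gamma_pos (s + / 2) ltac:(lra)).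
apply le_epsilon. intros eps He.
set (e := Rmin 1 (eps / (2 * Gamma (s + / 2) + 1))).
assert (He1 : 0 < e) by (apply Rmin_glb_lt; [lra|apply Rdiv_lt_0_compat; lra]).
assert (He2 : e <= 1) by apply Rmin_l.
assert (He3 : e * (2 * Gamma (s + / 2) + 1) <= eps).
{ apply Rmult_le_reg_r with (/ (2 * Gamma (s + / 2) + 1)); [apply Rinv_0_lt_compat; lra|].
  replace (e * (2 * Gamma (s + / 2) + 1) * / (2 * Gamma (s + / 2) + 1)) with e by (field; lra).
  apply Rmin_r. }
assert (S := Gamma_improper (s + / 2) ltac:(lra)).
destruct (improper_joint_approx 0 p_infty I _ _ _ _ e 1 1 S S) as [u [v [Hu [Huv [_ [_ [K _]]]]]]];
  simpl; auto; try lra.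
apply Rabs_def2 in K.
assert (R1 := RInt_Gamma_integrand_bounds (s + / 2) u v ltac:(lra) ltac:(lra) ltac:(lra)).
assert (R2 := RInt_Gamma_integrand_bounds s u v Hs ltac:(lra) ltac:(lra)).
assert (R3 := RInt_Gamma_integrand_bounds (s + 1) u v ltac:(lra) ltac:(lra) ltac:(lra)).
assert (CS := RInt_Gamma_integrand_log_convex s u v ltac:(lra) ltac:(lra)).
assert (RInt (Gamma_integrand s) u v * RInt (Gamma_integrand (s + 1)) u v <= Gamma s * Gamma (s + 1))
  by (apply Rmult_le_compat; lra).
assert (Gamma (s + / 2) ^ 2 <= (RInt (Gamma_integrand (s + / 2)) u v + e) ^ 2) by (apply pow_incr; lra).
nra.
Qed.

(** * The integral [B(a) = int_0^1 s^(a-1) (1-s)^(-1/2) ds] *)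

Lemma lim_asin_1 : lim_near (near_upper 1) asin (PI / 2).
Proof.
intros eps He. set (e := Rmin eps 1).
assert (He1 : 0 < e) by (apply Rmin_glb_lt; lra).
assert (He2 : e <= 1) by apply Rmin_r. assert (He3 : e <= eps) by apply Rmin_l.
assert (P := PI2_1).
assert (Hc : cos e < 1) by (rewrite <- cos_0; apply cos_decreasing_1; lra).
exists (1 - cos e). split; [lra|]. intros y Hy. simpl in Hy.
assert (B := asin_bound y). assert (Cb := COS_bound e).
assert (PI / 2 - e < asin y).
{ apply Rnot_le_lt. intro C.
  assert (sin (asin y) <= sin (PI / 2 - e)).
  { destruct (Req_dec (asin y) (PI / 2 - e)) as [Q|Q].
    - rewrite Q; apply Rle_refl.
    - apply Rlt_le, sin_increasing_1; lra. }
  rewrite sin_asin in H by lra. rewrite sin_shift in H. lra. }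
apply Rabs_def1; lra.
Qed.

Lemma is_derive_asin y : -1 < y < 1 -> is_derive asin y (1 / sqrt (1 - y²)).
Proof.
intros Hy. apply is_derive_Reals.
apply derive_pt_eq_1 with (derivable_pt_asin y Hy). apply derive_pt_asin.
Qed.

Definition Beta_half_integrand (a s : R) : R := Rpower s (a - 1) * Rpower (1 - s) (- (1 / 2)).

Definition Beta_half (a : R) : R :=
  epsilon (inhabits 0) (fun L => improper (Beta_half_integrand a) 0 1 L).

Lemma Beta_half_integrand_pos a s : 0 < Beta_half_integrand a s.
Proof. apply Rmult_lt_0_compat; apply Rpower_pos. Qed.

Lemma Beta_half_integrand_continuous a : continuous_open (Beta_half_integrand a) 0 1.
Proof.
intros s Hs Hs1. simpl in Hs1. apply (@ex_derive_continuous R_AbsRing R_NormedModule).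
unfold Beta_half_integrand, Rpower. auto_derive. lra.
Qed.

Lemma Beta_half_integrand_antitone a a' s : a <= a' -> 0 < s < 1 ->
  Beta_half_integrand a' s <= Beta_half_integrand a s.
Proof.
intros Ha Hs. apply Rmult_le_compat_r; [apply Rlt_le, Rpower_pos|]. apply Rpower_antitone; lra.
Qed.

Lemma is_derive_asin_affine s : 0 < s < 1 ->
  is_derive (fun s => asin (2 * s - 1)) s (Beta_half_integrand (1 / 2) s).
Proof.
intros Hs.
assert (E : Beta_half_integrand (1 / 2) s = 2 * (1 / sqrt (1 - (2 * s - 1)²))).
{ unfold Beta_half_integrand. replace (1 / 2 - 1) with (- / 2) by field. rewrite !Rpower_Ropp.
  replace (1 / 2) with (/ 2) by field. rewrite !Rpower_sqrt by lra.
  replace (1 - (2 * s - 1)²) with (2 * 2 * (s * (1 - s))) by (unfold Rsqr; ring).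
  rewrite sqrt_mult by nra. rewrite sqrt_square, sqrt_mult by lra.
  assert (0 < sqrt s) by (apply sqrt_lt_R0; lra).
  assert (0 < sqrt (1 - s)) by (apply sqrt_lt_R0; lra).
  field. lra. }
rewrite E. apply (is_derive_comp asin (fun s => 2 * s - 1) s).
- apply is_derive_asin. lra.
- auto_derive; auto. ring.
Qed.

Lemma Beta_half_integrand_half_improper : improper (Beta_half_integrand (1 / 2)) 0 1 PI.
Proof.
apply improper_of_primitive; [simpl; lra|apply Beta_half_integrand_continuous|].
exists (fun s => asin (2 * s - 1)), (- (PI / 2)), (PI / 2). split; [|split; [|split]].
- intros y Hy Hy1. apply is_derive_asin_affine. simpl in Hy1. lra.
- intros eps He. destruct (lim_asin_1 eps He) as [d [Hd K]]. exists (d / 2). split; [lra|].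
  intros y [Hy1 Hy2]. replace (2 * y - 1) with (- (1 - 2 * y)) by ring. rewrite asin_opp.
  replace (- asin (1 - 2 * y) - - (PI / 2)) with (- (asin (1 - 2 * y) - PI / 2)) by ring.
  rewrite Rabs_Ropp. apply K. simpl. lra.
- intros eps He. destruct (lim_asin_1 eps He) as [d [Hd K]]. exists (d / 2). split; [lra|].
  intros y Hy. simpl in Hy. apply K. simpl. lra.
- field.
Qed.

(* The integrand decreases in [a], so for [a >= 1/2] the case [a = 1/2] bounds the partial integrals. *)
Lemma Beta_half_primitive a : 1 / 2 <= a -> improper_primitive (Beta_half_integrand a) 0 1 (Beta_half a).
Proof.
intros Ha.
assert (Hcont := Beta_half_integrand_continuous a).
destruct (improper_primitive_of_bounded 0 1 ltac:(simpl; lra) (Beta_half_integrand a) PI Hcont)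
  as [L HL].
- intros; apply Rlt_le, Beta_half_integrand_pos.
- intros u v Hu Huv Hv. simpl in Hv. apply Rle_trans with (RInt (Beta_half_integrand (1 / 2)) u v).
  + apply RInt_le; auto.
    * apply (ex_RInt_continuous_open _ 0 1); auto.
    * apply (ex_RInt_continuous_open _ 0 1); auto. apply Beta_half_integrand_continuous.
    * intros; apply Beta_half_integrand_antitone; lra.
  + apply (RInt_le_improper 0 1 ltac:(simpl; lra)); auto.
    * apply Beta_half_integrand_half_improper.
    * intros; apply Rlt_le, Beta_half_integrand_pos.
- replace (Beta_half a) with L; auto.
  apply (improper_unique 0 1 ltac:(simpl; lra) (Beta_half_integrand a)).
  + apply improper_of_primitive; auto. simpl; lra.
  + unfold Beta_half. apply epsilon_spec. exists L. apply improper_of_primitive; auto. simpl; lra.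
Qed.

Lemma Beta_half_improper a : 1 / 2 <= a -> improper (Beta_half_integrand a) 0 1 (Beta_half a).
Proof.
intros Ha. apply improper_of_primitive; [simpl; lra|apply Beta_half_integrand_continuous|].
apply Beta_half_primitive; auto.
Qed.

Lemma Beta_half_pos a : 1 / 2 <= a -> 0 < Beta_half a.
Proof.
intros Ha. apply (improper_pos 0 1 ltac:(simpl; lra) (Beta_half_integrand a)).
- apply Beta_half_improper; auto.
- apply Beta_half_integrand_continuous.
- intros; apply Beta_half_integrand_pos.
Qed.

Lemma Beta_half_antitone a a' : 1 / 2 <= a -> a <= a' -> Beta_half a' <= Beta_half a.
Proof.
intros Ha Haa. apply (improper_le 0 1 ltac:(simpl; lra) (Beta_half_integrand a') (Beta_half_integrand a)).
- apply Beta_half_improper; lra.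
- apply Beta_half_improper; lra.
- intros t Ht Ht1. simpl in Ht1. apply Beta_half_integrand_antitone; lra.
Qed.

Lemma Beta_half_at_half : Beta_half (1 / 2) = PI.
Proof.
apply (improper_unique 0 1 ltac:(simpl; lra) (Beta_half_integrand (1 / 2))).
- apply Beta_half_improper; lra.
- apply Beta_half_integrand_half_improper.
Qed.

Lemma Beta_half_at_one : Beta_half 1 = 2.
Proof.
apply (improper_unique 0 1 ltac:(simpl; lra) (Beta_half_integrand 1)); [apply Beta_half_improper; lra|].
apply improper_of_primitive; [simpl; lra|apply Beta_half_integrand_continuous|].
exists (fun s => -2 * Rpower (1 - s) (1 / 2)), (-2), 0. split; [|split; [|split]].
- intros y Hy Hy1. simpl in Hy1. unfold Beta_half_integrand, Rpower. auto_derive; [lra|].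
  replace ((1 - 1) * ln y) with 0 by ring. rewrite exp_0.
  replace (- (1 / 2) * ln (1 - y)) with (1 / 2 * ln (1 - y) + - ln (1 - y)) by field.
  replace (1 + - y) with (1 - y) by ring.
  rewrite exp_plus, exp_Ropp, exp_ln by lra. field. lra.
- apply lim_near_continuous with 0.
  + apply (@ex_derive_continuous R_AbsRing R_NormedModule). unfold Rpower. auto_derive. lra.
  + rewrite Rminus_0_r. unfold Rpower. rewrite ln_1, Rmult_0_r, exp_0. ring.
  + intros d y [Hy1 Hy2]. rewrite Rminus_0_r, Rabs_pos_eq; lra.
- replace 0 with (-2 * 0) by ring. apply lim_near_scal, lim_Rpower_1. lra.
- ring.
Qed.

(* Integration by parts: [d/ds (s^a (1-s)^(1/2)) = a s^(a-1) (1-s)^(-1/2) - (a + 1/2) s^a (1-s)^(-1/2)]. *)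
Lemma Beta_half_succ a : 1 / 2 <= a -> (a + 1 / 2) * Beta_half (a + 1) = a * Beta_half a.
Proof.
intros Ha.
set (P := fun s => Rpower s a * Rpower (1 - s) (1 / 2)).
assert (HP : forall s, 0 < s < 1 -> Rabs (P s) = P s)
  by (intros s Hs; apply Rabs_pos_eq, Rlt_le, Rmult_lt_0_compat; apply Rpower_pos).
assert (H1 : improper (fun s => a * Beta_half_integrand a s + (- (a + 1 / 2)) * Beta_half_integrand (a + 1) s)
               0 1 (0 - 0)).
{ apply improper_of_primitive; [simpl; lra| |].
  { intros y Hy Hy1. simpl in Hy1. apply (@ex_derive_continuous R_AbsRing R_NormedModule).
    unfold Beta_half_integrand, Rpower. auto_derive. lra. }
  exists P, 0, 0. split; [|split; [|split]]; auto.
  - intros y Hy Hy1. simpl in Hy1. unfold P, Beta_half_integrand. replace (a + 1 - 1) with a by ring.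
    rewrite Rpower_pred by lra.
    replace (- (1 / 2)) with (1 / 2 - 1) by field. rewrite (Rpower_pred (1 - y)) by lra.
    unfold Rpower. auto_derive; [lra|]. unfold Rminus. field. lra.
  - apply lim_near_squeeze with (fun s => Rpower s a) 1; [apply near_lower_monotone|lra| |].
    + intros y [Hy1 Hy2]. rewrite HP by lra. unfold P.
      assert (Rpower (1 - y) (1 / 2) <= 1) by (apply Rpower_le_1; lra).
      assert (0 < Rpower y a) by apply Rpower_pos. nra.
    + apply lim_Rpower_0; lra.
  - apply lim_near_squeeze with (fun s => Rpower (1 - s) (1 / 2)) 1; [apply near_upper_monotone|lra| |].
    + intros y Hy. simpl in Hy. rewrite HP by lra. unfold P.
      assert (Rpower y a <= 1) by (apply Rpower_le_1; lra).
      assert (0 < Rpower (1 - y) (1 / 2)) by apply Rpower_pos. nra.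
    + apply lim_Rpower_1; lra. }
assert (H2 := improper_lin 0 1 ltac:(simpl; lra) _ _ _ _ a (- (a + 1 / 2))
                (Beta_half_improper a Ha) (Beta_half_improper (a + 1) ltac:(lra))).
assert (E := improper_unique 0 1 ltac:(simpl; lra) _ _ _ H1 H2). lra.
Qed.

(** * [B(a) = sqrt pi Gamma(a) / Gamma(a + 1/2)] *)

Definition Gamma_half_ratio (c : R) : R := Gamma (c + / 2) / Gamma c.

Definition Beta_Gamma_ratio (a : R) : R := Beta_half a * Gamma_half_ratio a.

Lemma Beta_Gamma_ratio_pos a : 1 / 2 <= a -> 0 < Beta_Gamma_ratio a.
Proof.
intros Ha. apply Rmult_lt_0_compat; [apply Beta_half_pos; auto|].
apply Rdiv_lt_0_compat; apply Gamma_pos; lra.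
Qed.

Lemma Beta_Gamma_ratio_periodic a : 1 / 2 <= a -> Beta_Gamma_ratio (a + 1) = Beta_Gamma_ratio a.
Proof.
intros Ha. unfold Beta_Gamma_ratio, Gamma_half_ratio.
replace (a + 1 + / 2) with ((a + / 2) + 1) by ring.
rewrite !Gamma_succ by lra.
assert (B := Beta_half_succ a Ha).
assert (P1 := Gamma_pos a ltac:(lra)). assert (P2 := Gamma_pos (a + / 2) ltac:(lra)).
apply Rmult_eq_reg_r with (a * Gamma a); [|nra].
replace (Beta_half (a + 1) * ((a + / 2) * Gamma (a + / 2) / (a * Gamma a)) * (a * Gamma a))
  with ((a + 1 / 2) * Beta_half (a + 1) * Gamma (a + / 2)) by (field; lra).
rewrite B. field. lra.
Qed.

Lemma Beta_Gamma_ratio_periodic_nat a n : 1 / 2 <= a -> Beta_Gamma_ratio (a + INR n) = Beta_Gamma_ratio a.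
Proof.
intros Ha. induction n as [|n IHn].
- simpl. rewrite Rplus_0_r; auto.
- rewrite S_INR, <- Rplus_assoc, Beta_Gamma_ratio_periodic; auto.
  assert (0 <= INR n) by apply pos_INR. lra.
Qed.

(* Log-convexity at [c] and at [c + 1/2], together with [Gamma (c + 1) = c Gamma c]. *)
Lemma Gamma_half_ratio_sq_bounds c : 1 / 2 <= c ->
  c * c / (c + / 2) <= Gamma_half_ratio c ^ 2 <= c.
Proof.
intros Hc. unfold Gamma_half_ratio.
assert (P1 := Gamma_pos c ltac:(lra)). assert (P2 := Gamma_pos (c + / 2) ltac:(lra)).
assert (L1 := Gamma_half_log_convex c ltac:(lra)).
assert (L2 := Gamma_half_log_convex (c + / 2) ltac:(lra)).
replace (c + / 2 + / 2) with (c + 1) in L2 by field.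
rewrite Gamma_succ in L1, L2 by lra. rewrite Gamma_succ in L2 by lra.
set (g := Gamma c) in *. set (h := Gamma (c + / 2)) in *.
replace ((h / g) ^ 2) with (h * h / (g * g)) by (field; lra).
split.
- apply Rmult_le_reg_r with ((c + / 2) * (g * g)); [nra|].
  replace (c * c / (c + / 2) * ((c + / 2) * (g * g))) with (c * c * (g * g)) by (field; lra).
  replace (h * h / (g * g) * ((c + / 2) * (g * g))) with ((c + / 2) * (h * h)) by (field; lra). nra.
- apply Rmult_le_reg_r with (g * g); [nra|].
  replace (h * h / (g * g) * (g * g)) with (h * h) by (field; lra). nra.
Qed.

Lemma Beta_half_shift_bounds c d : 1 / 2 <= c <= d -> d <= c + 1 ->
  Beta_half d <= Beta_half c <= (c + / 2) / c * Beta_half d.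
Proof.
intros Hcd Hdc. split; [apply Beta_half_antitone; lra|].
assert (Hsucc := Beta_half_succ c ltac:(lra)).
assert (B1 : Beta_half (c + 1) <= Beta_half d) by (apply Beta_half_antitone; lra).
apply Rmult_le_reg_l with c; [lra|].
replace (c * ((c + / 2) / c * Beta_half d)) with ((c + 1 / 2) * Beta_half d) by (field; lra).
rewrite <- Hsucc. apply Rmult_le_compat_l; lra.
Qed.

Lemma Beta_Gamma_ratio_sq_close c d : 1 <= c <= d -> d <= c + 1 ->
  Beta_Gamma_ratio d ^ 2 <= (1 + 3 / c) * Beta_Gamma_ratio c ^ 2 /\
  Beta_Gamma_ratio c ^ 2 <= (1 + 3 / c) * Beta_Gamma_ratio d ^ 2.
Proof.
intros Hcd Hdc. unfold Beta_Gamma_ratio. rewrite !Rpow_mult_distr.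
destruct (Beta_half_shift_bounds c d ltac:(lra) Hdc) as [B1 B2].
destruct (Gamma_half_ratio_sq_bounds c ltac:(lra)) as [Sc1 Sc2].
destruct (Gamma_half_ratio_sq_bounds d ltac:(lra)) as [Sd1 Sd2].
assert (Bd := Beta_half_pos d ltac:(lra)).
set (q := (c + / 2) / c) in *.
assert (Hq : 1 <= q <= 1 + / 2) by (unfold q; split; apply Rmult_le_reg_r with c;
  try lra; field_simplify; lra).
assert (Hq3 : q ^ 3 <= 1 + 3 / c).
{ replace q with (1 + / (2 * c)) by (unfold q; field; lra).
  replace (3 / c) with (6 * / (2 * c)) by (field; lra).
  assert (0 < / (2 * c) <= / 2) by (split; [apply Rinv_0_lt_compat|apply Rinv_le_contravar]; lra).
  nra. }
assert (Hc3 : 0 < 3 / c) by (apply Rdiv_lt_0_compat; lra).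
assert (Hsd : Gamma_half_ratio d ^ 2 <= (1 + 3 / c) * Gamma_half_ratio c ^ 2).
{ apply Rle_trans with (c + 1); [lra|]. apply Rle_trans with ((1 + 3 / c) * (c * c / (c + / 2))).
  - apply Rmult_le_reg_r with (c * (c + / 2)); [nra|].
    replace ((1 + 3 / c) * (c * c / (c + / 2)) * (c * (c + / 2))) with ((c + 3) * (c * c)) by (field; lra).
    nra.
  - apply Rmult_le_compat_l; lra. }
assert (Hsc : Gamma_half_ratio c ^ 2 <= q * Gamma_half_ratio d ^ 2).
{ apply Rle_trans with c; [lra|]. apply Rle_trans with (q * (d * d / (d + / 2))); [|apply Rmult_le_compat_l; lra].
  unfold q. apply Rmult_le_reg_r with (c * (d + / 2)); [nra|].
  replace ((c + / 2) / c * (d * d / (d + / 2)) * (c * (d + / 2))) with ((c + / 2) * (d * d)) by (field; lra).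
  assert (0 <= c * d * (d - c)) by (repeat apply Rmult_le_pos; lra). nra. }
split.
- apply Rle_trans with (Beta_half c ^ 2 * ((1 + 3 / c) * Gamma_half_ratio c ^ 2)).
  + apply Rmult_le_compat; [apply pow2_ge_0|apply pow2_ge_0|apply pow_incr; lra|auto].
  + apply Req_le. ring.
- apply Rle_trans with ((q * Beta_half d) ^ 2 * (q * Gamma_half_ratio d ^ 2)).
  + apply Rmult_le_compat; [apply pow2_ge_0|apply pow2_ge_0|apply pow_incr; lra|auto].
  + replace ((q * Beta_half d) ^ 2 * (q * Gamma_half_ratio d ^ 2))
      with (q ^ 3 * (Beta_half d ^ 2 * Gamma_half_ratio d ^ 2)) by ring.
    apply Rmult_le_compat_r; [apply Rmult_le_pos; apply pow2_ge_0|auto].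
Qed.

Lemma Rle_of_nat_approx X Y c k : 0 <= Y -> 0 <= k ->
  (forall n : nat, 1 <= c + INR n -> X <= (1 + k / (c + INR n)) * Y) -> X <= Y.
Proof.
intros HY Hk H. apply Rnot_lt_le. intro HXY.
destruct (nfloor_ex (k * Y / (X - Y) + Rabs c + 1)) as [n [_ Hn]].
{ assert (0 <= k * Y / (X - Y)) by (apply Rmult_le_pos; [nra|apply Rlt_le, Rinv_0_lt_compat; lra]).
  generalize (Rabs_pos c); lra. }
assert (Hc := RRle_abs (- c)). rewrite Rabs_Ropp in Hc.
set (m := c + INR (S n)).
assert (Hm : k * Y / (X - Y) < m) by (unfold m; rewrite S_INR; lra).
assert (Hm1 : 1 <= m) by (unfold m; rewrite S_INR; assert (0 <= k * Y / (X - Y)) by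
  (apply Rmult_le_pos; [nra|apply Rlt_le, Rinv_0_lt_compat; lra]); lra).
specialize (H (S n) Hm1). fold m in H.
assert (k * Y < m * (X - Y)).
{ apply Rmult_lt_compat_r with (r := X - Y) in Hm; [|lra].
  replace (k * Y / (X - Y) * (X - Y)) with (k * Y) in Hm by (field; lra). lra. }
replace ((1 + k / m) * Y) with (Y + k * Y / m) in H by (field; lra).
assert (k * Y / m < X - Y); [|lra].
apply Rmult_lt_reg_r with m; [lra|]. replace (k * Y / m * m) with (k * Y) by (field; lra). lra.
Qed.

(* Shifting both points by [n] changes neither value (periodicity) while the
   comparison factor [1 + 3 / (a + n)] tends to [1]. *)
Lemma Beta_Gamma_ratio_locally_constant a b : 1 / 2 <= a <= b -> b <= a + 1 ->
  Beta_Gamma_ratio a = Beta_Gamma_ratio b.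
Proof.
intros Hab Hba.
assert (Close : forall n : nat, 1 <= a + INR n ->
  Beta_Gamma_ratio b ^ 2 <= (1 + 3 / (a + INR n)) * Beta_Gamma_ratio a ^ 2 /\
  Beta_Gamma_ratio a ^ 2 <= (1 + 3 / (a + INR n)) * Beta_Gamma_ratio b ^ 2).
{ intros n Hn. assert (0 <= INR n) by apply pos_INR.
  rewrite <- (Beta_Gamma_ratio_periodic_nat a n), <- (Beta_Gamma_ratio_periodic_nat b n) by lra.
  apply Beta_Gamma_ratio_sq_close; lra. }
assert (Pa := Beta_Gamma_ratio_pos a ltac:(lra)). assert (Pb := Beta_Gamma_ratio_pos b ltac:(lra)).
assert (Le1 : Beta_Gamma_ratio b ^ 2 <= Beta_Gamma_ratio a ^ 2)
  by (apply (Rle_of_nat_approx _ _ a 3); [apply pow2_ge_0|lra|intros n Hn; apply Close; auto]).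
assert (Le2 : Beta_Gamma_ratio a ^ 2 <= Beta_Gamma_ratio b ^ 2)
  by (apply (Rle_of_nat_approx _ _ a 3); [apply pow2_ge_0|lra|intros n Hn; apply Close; auto]).
nra.
Qed.

Lemma Beta_Gamma_ratio_constant a : 1 / 2 <= a -> Beta_Gamma_ratio a = Beta_Gamma_ratio (1 / 2).
Proof.
intros Ha. destruct (nfloor_ex (a - 1 / 2)) as [n Hn]; [lra|].
rewrite <- (Beta_Gamma_ratio_periodic_nat (1 / 2) n) by lra.
symmetry. apply Beta_Gamma_ratio_locally_constant; assert (0 <= INR n) by apply pos_INR; lra.
Qed.

Lemma Beta_Gamma_ratio_value a : 1 / 2 <= a -> Beta_Gamma_ratio a = sqrt PI.
Proof.
intros Ha.
assert (Prod : Beta_Gamma_ratio (1 / 2) * Beta_Gamma_ratio 1 = PI).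
{ unfold Beta_Gamma_ratio, Gamma_half_ratio.
  replace (1 / 2 + / 2) with 1 by field. replace (1 + / 2) with (1 / 2 + 1) by field.
  rewrite Gamma_succ, Beta_half_at_half, Beta_half_at_one by lra.
  assert (P1 := Gamma_pos 1 ltac:(lra)). assert (P2 := Gamma_pos (1 / 2) ltac:(lra)).
  field. lra. }
rewrite (Beta_Gamma_ratio_constant 1) in Prod by lra.
rewrite Beta_Gamma_ratio_constant, <- Prod by auto.
assert (0 < Beta_Gamma_ratio (1 / 2)) by (apply Beta_Gamma_ratio_pos; lra).
rewrite sqrt_square; lra.
Qed.

Lemma Beta_half_Gamma a : 1 / 2 <= a -> Beta_half a = sqrt PI * Gamma a / Gamma (a + / 2).
Proof.
intros Ha. rewrite <- (Beta_Gamma_ratio_value a Ha). unfold Beta_Gamma_ratio, Gamma_half_ratio.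
assert (P1 := Gamma_pos a ltac:(lra)). assert (P2 := Gamma_pos (a + / 2) ltac:(lra)). field. lra.
Qed.

(** * The substitution *)

Definition I_plus_integrand (mu : R) (f : R -> R) (x t : R) : R :=
  Rpower (x - t) (- (1 / 2)) * Rpower (1 + t) mu * f t.

(* In terms of [w = 1 + x], [z = 2 w / 5] and [s = (1 + t) / w]: the map is
   [(1 - z) s / (1 - z s)], and [3 - 2 t = 5 (1 - z s)], [x - t = w (1 - s)]. *)
Definition subst_map (x t : R) : R :=
  (1 - 2 * (1 + x) / 5) * ((1 + t) / (1 + x)) / (1 - 2 * (1 + x) / 5 * ((1 + t) / (1 + x))).

Definition subst_map_deriv (x t : R) : R :=
  (1 - 2 * (1 + x) / 5) / ((1 + x) * (1 - 2 * (1 + x) / 5 * ((1 + t) / (1 + x))) ^ 2).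

Definition subst_factor (gam x : R) : R :=
  Rpower (1 + x) (gam - 1) / sqrt 5 * Rpower (3 - 2 * x) (- (gam - 1 / 2)).

Lemma sqrt_exp_ln x : 0 < x -> sqrt x = exp (1 / 2 * ln x).
Proof.
intros Hx. rewrite <- (sqrt_square (exp (1 / 2 * ln x))) by (apply Rlt_le, exp_pos).
f_equal. rewrite <- exp_plus. replace (1 / 2 * ln x + 1 / 2 * ln x) with (ln x) by field.
rewrite exp_ln; auto.
Qed.

Lemma subst_map_integrand m gam x t : -1 < x <= 1 -> -1 < t < x ->
  subst_factor gam x * (subst_map_deriv x t * Beta_half_integrand (gam - 1 / 2) (subst_map x t)) =
  I_plus_integrand (gam - INR m - 3 / 2) (g_fun m gam) x t.
Proof.
intros Hx Ht. unfold subst_map, subst_map_deriv, subst_factor, I_plus_integrand, g_fun, Beta_half_integrand.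
set (w := 1 + x). set (z := 2 * w / 5). set (s := (1 + t) / w).
assert (Hw : 0 < w) by (unfold w; lra).
assert (Hz : 0 < z <= 4 / 5) by (unfold z, w; split; lra).
assert (Hs : 0 < s < 1).
{ unfold s. split; [apply Rdiv_lt_0_compat; lra|].
  apply Rmult_lt_reg_r with w; auto. field_simplify; unfold w; lra. }
assert (Hzs : 0 < 1 - z * s) by nra.
assert (H1z : 0 < 1 - z) by lra.
rewrite <- (Rpower_pow m (t + 1)) by lra.
replace (x - t) with (w * (1 - s)) by (unfold s, w; field; lra).
replace (1 + t) with (w * s) by (unfold s; field; lra).
replace (t + 1) with (w * s) by (unfold s; field; lra).
replace (3 - 2 * t) with (5 * (1 - z * s)) by (unfold s, z, w; field; lra).
replace (3 - 2 * x) with (5 * (1 - z)) by (unfold z, w; field).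
replace (1 - (1 - z) * s / (1 - z * s)) with ((1 - s) / (1 - z * s)) by (field; lra).
replace ((1 - z) / (w * (1 - z * s) ^ 2))
  with (exp (ln (1 - z) + - ln w + - ln (1 - z * s) + - ln (1 - z * s))).
2:{ rewrite !exp_plus, !exp_Ropp, !exp_ln by lra. field. lra. }
rewrite (sqrt_exp_ln 5) by lra. unfold Rpower.
rewrite !ln_mult by nra. rewrite !ln_div by nra. rewrite !ln_mult by nra.
unfold Rdiv at 1. rewrite <- exp_Ropp, <- !exp_plus. f_equal. field.
Qed.

Lemma subst_map_bounds x t : -1 < x <= 1 -> -1 < t < x ->
  0 < subst_map x t <= (1 + t) / (1 + x) /\
  1 - (x - t) / ((1 + x) * (1 - 2 * (1 + x) / 5)) <= subst_map x t < 1.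
Proof.
intros Hx Ht. unfold subst_map.
set (w := 1 + x). set (z := 2 * w / 5). set (s := (1 + t) / w).
assert (Hw : 0 < w) by (unfold w; lra).
assert (Hz : 0 < z <= 4 / 5) by (unfold z, w; split; lra).
assert (Hs : 0 < s < 1).
{ unfold s. split; [apply Rdiv_lt_0_compat; lra|].
  apply Rmult_lt_reg_r with w; auto. field_simplify; unfold w; lra. }
assert (Hzs : 0 < 1 - z * s) by nra.
assert (H1z : 0 < 1 - z) by lra.
replace (x - t) with (w * (1 - s)) by (unfold s, w; field; lra).
replace (w * (1 - s) / (w * (1 - z))) with ((1 - s) / (1 - z)) by (field; lra).
assert (E : (1 - z) * s / (1 - z * s) = 1 - (1 - s) / (1 - z * s)) by (field; lra).
rewrite E. split; [split|split].
- assert ((1 - s) / (1 - z * s) < 1); [|lra].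
  apply Rmult_lt_reg_r with (1 - z * s); auto. field_simplify; nra.
- rewrite <- E. apply Rmult_le_reg_r with (1 - z * s); auto.
  replace ((1 - z) * s / (1 - z * s) * (1 - z * s)) with ((1 - z) * s) by (field; lra).
  assert (0 <= z * s * (1 - s)) by (apply Rmult_le_pos; [apply Rmult_le_pos|]; lra). nra.
- assert ((1 - s) / (1 - z * s) <= (1 - s) / (1 - z)); [|lra].
  apply Rmult_le_compat_l; [lra|]. apply Rinv_le_contravar; nra.
- assert (0 < (1 - s) / (1 - z * s)); [apply Rdiv_lt_0_compat|]; lra.
Qed.

Lemma is_derive_subst_map x t : -1 < x <= 1 -> -1 < t < x -> is_derive (subst_map x) t (subst_map_deriv x t).
Proof.
intros Hx Ht. set (z := 2 * (1 + x) / 5).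
assert (Hs : 0 < (1 + t) / (1 + x) < 1).
{ split; [apply Rdiv_lt_0_compat; lra|]. apply Rmult_lt_reg_r with (1 + x); [lra|]. field_simplify; lra. }
assert (Hzs : 0 < 1 - z * ((1 + t) / (1 + x))) by (unfold z; nra).
unfold subst_map, subst_map_deriv. auto_derive.
- repeat split; try lra. fold z. lra.
- fold z. field. split; [lra|].
  replace (1 + x - z * (1 + t)) with ((1 + x) * (1 - z * ((1 + t) / (1 + x)))) by (field; lra).
  apply Rgt_not_eq, Rmult_lt_0_compat; lra.
Qed.

Lemma I_plus_g_improper m gam x : gam >= INR m + 3 / 2 -> -1 < x <= 1 ->
  improper (I_plus_integrand (gam - INR m - 3 / 2) (g_fun m gam) x) (-1) x
    (subst_factor gam x * Beta_half (gam - 1 / 2)).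
Proof.
intros Hg Hx. assert (Hm := pos_INR m).
set (z := 2 * (1 + x) / 5). assert (Hz : 0 < 1 - z) by (unfold z; lra).
apply improper_of_primitive; [simpl; lra| |].
{ intros t Ht Htx. simpl in Htx. apply (@ex_derive_continuous R_AbsRing R_NormedModule).
  unfold I_plus_integrand, g_fun, Rpower. auto_derive. repeat split; lra. }
apply improper_primitive_ext with (fun t => subst_factor gam x *
  (subst_map_deriv x t * Beta_half_integrand (gam - 1 / 2) (subst_map x t))).
{ intros t Ht Htx. apply subst_map_integrand; simpl in Htx; lra. }
apply improper_primitive_scal.
apply (improper_primitive_comp (Beta_half_integrand (gam - 1 / 2)) (subst_map x) (subst_map_deriv x) 0 (-1) 1 x).
- apply Beta_half_primitive. lra.
- intros t Ht Htx. simpl in Htx. destruct (subst_map_bounds x t) as [[B1 _] [_ B2]]; try lra.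
  split; [apply is_derive_subst_map; lra|split; auto].
- intros d Hd. exists (Rmin (d * (1 + x)) (1 + x)). split; [apply Rmin_glb_lt; nra|].
  intros t [Ht1 Ht2]. assert (Hm1 := Rmin_l (d * (1 + x)) (1 + x)). assert (Hm2 := Rmin_r (d * (1 + x)) (1 + x)).
  destruct (subst_map_bounds x t) as [[B1 B2] _]; try lra.
  split; auto. apply Rle_lt_trans with ((1 + t) / (1 + x)); auto.
  apply Rmult_lt_reg_r with (1 + x); [lra|]. field_simplify; lra.
- intros d Hd. exists (Rmin (d * ((1 + x) * (1 - z))) (1 + x)).
  split; [apply Rmin_glb_lt; [apply Rmult_lt_0_compat; [|apply Rmult_lt_0_compat]|]; lra|].
  intros t Ht. simpl in Ht |- *. assert (Hm1 := Rmin_l (d * ((1 + x) * (1 - z))) (1 + x)).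
  assert (Hm2 := Rmin_r (d * ((1 + x) * (1 - z))) (1 + x)).
  destruct (subst_map_bounds x t) as [_ [B1 B2]]; try lra. fold z in B1.
  split; auto. assert ((x - t) / ((1 + x) * (1 - z)) < d); [|lra].
  apply Rmult_lt_reg_r with ((1 + x) * (1 - z)); [apply Rmult_lt_0_compat; lra|].
  field_simplify; lra.
Qed.

Lemma I_plus_g m gam x : gam >= INR m + 3 / 2 -> -1 < x <= 1 ->
  I_plus_eq (gam - INR m - 3 / 2) (g_fun m gam) x
    (sqrt (PI / 5) * (Gamma (gam - 1 / 2) / Gamma gam)
       * (x + 1) ^ (m + 1) * Rpower (3 - 2 * x) (- (gam - 1 / 2))).
Proof.
intros Hg Hx. assert (Hm := pos_INR m).
exists (subst_factor gam x * Beta_half (gam - 1 / 2)). split.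
- apply improper_int_ab_of_improper, I_plus_g_improper; auto.
- rewrite Beta_half_Gamma by lra. replace (gam - 1 / 2 + / 2) with gam by field.
  assert (Hpow : Rpower (1 + x) (- (gam - INR m - 3 / 2) + 1 / 2) * Rpower (1 + x) (gam - 1)
                 = (x + 1) ^ (m + 1)).
  { rewrite <- Rpower_plus, <- Rpower_pow by lra. f_equal; [ring|]. rewrite plus_INR. simpl. field. }
  unfold subst_factor. rewrite sqrt_div_alt, <- Hpow by lra.
  assert (HG := Gamma_pos gam ltac:(lra)). assert (0 < sqrt 5) by (apply sqrt_lt_R0; lra).
  field. lra.
Qed.

Theorem mainTheorem11 :
  (forall (m : nat) (gam : R), gam >= INR m + 3/2 ->
     forall x : R, -1 < x <= 1 ->
       I_plus_eq (gam - INR m - 3/2) (g_fun m gam) x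
         (sqrt (PI / 5) * (Gamma (gam - 1/2) / Gamma gam)
            * (x + 1) ^ (m + 1) * Rpower (3 - 2 * x) (- (gam - 1/2))))
  /\
  (forall lam : R, lam >= 0 ->
     forall x : R, -1 < x <= 1 ->
       I_plus_eq lam (phi_fun lam) x
         (sqrt (PI / 5) * (Gamma (lam + 1) / Gamma (lam + 3/2))
            * (x + 1) * Rpower (3 - 2 * x) (- (lam + 1)))).
Proof.
split; [intros m gam Hg x Hx; apply I_plus_g; auto|].
intros lam Hl x Hx.
assert (H := I_plus_g 0 (lam + 3 / 2) x ltac:(simpl; lra) Hx).
assert (Hphi : g_fun 0 (lam + 3 / 2) = phi_fun lam).
{ apply functional_extensionality. intros t. unfold g_fun, phi_fun. simpl.
  rewrite Rmult_1_l. f_equal. field. }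
rewrite Hphi in H. simpl INR in H.
replace (lam + 3 / 2 - 0 - 3 / 2) with lam in H by ring.
replace (lam + 3 / 2 - 1 / 2) with (lam + 1) in H by field.
replace ((x + 1) ^ (0 + 1)) with (x + 1) in H by (simpl; ring).
exact H.
Qed.
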